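(* Consider the binary sequential learning model with heterogeneous privacy budgets described in the context, with signal accuracy $p\in(1/2,1)$. Let $\alpha=(1-p)/p$, $\bar u=\mathbb{E}_{\varepsilon_n}\!\left[\frac{1}{1+e^{\varepsilon_n}}\right]$, and for each integer $k\ge 2$ let $$\tilde v_k=\frac{1-\alpha^{\frac{k-2}{k-1}}}{1-\alpha^{\frac{k-2}{k-1}}+\alpha^{\frac{-1}{k-1}}-\alpha}.$$ Suppose each agent $n$ adopts the randomized response strategy with flip probability $u_n(\varepsilon_n)=\frac{1}{1+e^{\varepsilon_n}}$. Then for $\bar u\in[\tilde v_k,\tilde v_{k+1})$, the information cascade threshold $k$ remains unchanged, and the probability of a correct cascade decreases with the expected flipping probability $\bar u$.
   Context: Binary model: unknown state $\theta\in\{-1,+1\}$ with uniform prior; agents $n=1,2,\dots$ act in sequence; agent $n$ privately observes $s_n\in\{-1,+1\}$, i.i.d. given $\theta$ with $\mathbb{P}(s_n=\theta\mid\theta)=p$. Each agent $n$ has a privacy budget $\varepsilon_n$ drawn independently from a distribution for which $\bar u=\mathbb{E}[1/(1+e^{\varepsilon_n})]$ exists. Before a cascade, agent $n$'s intended action equals her signal and she reports $x_n=a_n$ with probability $1-u_n$ and $x_n=-a_n$ with probability $u_n=1/(1+e^{\varepsilon_n})$. Agents interpret the public history using the expected flip probability $\bar u$: if there are $k$ more $+1$ reports than $-1$ reports, the public log-likelihood ratio is $k\log\frac{\bar u(1-p)+p(1-\bar u)}{(1-p)(1-\bar u)+\bar u p}$. Let $\bar\rho=\frac{(1-\bar u)(1-p)+\bar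 u p}{\bar u(1-p)+p(1-\bar u)}$. The information cascade threshold is $k=\lfloor\log_{\bar\rho}\frac{1-p}{p}\rfloor+1$. An information cascade starts at the first agent whose history has (number of $+1$ reports) $-$ (number of $-1$ reports) equal to $\pm k$; from then on all agents take and truthfully report the action favored by the history. It is a correct cascade if that action equals $\theta$. *)

From HB Require Import structures.
From mathcomp Require Import all_boot all_order all_algebra.
From mathcomp Require Import all_classical all_reals all_analysis.
Set Implicit Arguments. Unset Strict Implicit. Unset Printing Implicit Defensive.
Import Order.TTheory GRing.Theory Num.Theory.
Import numFieldNormedType.Exports.
Local Open Scope ring_scope.

Section Model.
Variable R : realType.

Definition flip_prob (eps : R) : R := (1 + expR eps)^-1.

Definition u_bar (P : probability R R) : R :=
  fine (\int[P]_e (flip_prob e)%:E)%E.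

(* Probability (given theta and the budget eps) that a pre-cascade agent's
   report equals theta: signal correct and not flipped, or wrong and flipped. *)
Definition report_correct_given (p eps : R) : R :=
  p * (1 - flip_prob eps) + (1 - p) * flip_prob eps.

(* Marginal probability (budgets drawn i.i.d. from P, independent of signals)
   that a pre-cascade report equals theta. *)
Definition q_report (P : probability R R) (p : R) : R :=
  fine (\int[P]_e (report_correct_given p e)%:E)%E.

Definition rho_bar (p u : R) : R :=
  ((1 - u) * (1 - p) + u * p) / (u * (1 - p) + p * (1 - u)).

Definition cascade_threshold (p u : R) : int :=
  Num.floor (ln ((1 - p) / p) / ln (rho_bar p u)) + 1.

Definition v_tilde (p : R) (k : nat) : R :=
  let a := (1 - p) / p in
  let b := a `^ ((k%:R - 2) / (k%:R - 1)) in
  (1 - b) / (1 - b + a `^ (- (1 / (k%:R - 1))) - a).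

(* Report sequences are written in theta-aligned form: x_i = true iff the
   report of agent i+1 equals theta. *)
Definition diff_after (n : nat) (x : n.-tuple bool) (i : nat) : int :=
  \sum_(j < n | (j < i)%N) (if tnth x j then 1 else -1).

(* The history reaches +k (the theta side) before ever reaching -k,
   i.e. a correct cascade has started by agent n+1. *)
Definition correct_cascade_by (k n : nat) (x : n.-tuple bool) : bool :=
  [exists i : 'I_n.+1,
     (diff_after x i == k%:Z) &&
     [forall j : 'I_n.+1, (j < i)%N ==> (`|diff_after x j| < k%:Z)]].

(* probability of a theta-aligned report sequence of the first n agents
   (before any cascade, reports are i.i.d. with P(x = theta) = q) *)
Definition seq_prob (q : R) (n : nat) (x : n.-tuple bool) : R :=
  \prod_(j < n) (if tnth x j then q else 1 - q).

Definition correct_cascade_prob_upto (q : R) (k n : nat) : R :=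
  \sum_(x : n.-tuple bool | correct_cascade_by k x) seq_prob q x.

(* Probability of a correct cascade (conditionally on theta; by symmetry
   this is also the unconditional probability under the uniform prior). *)
Definition correct_cascade_prob (P : probability R R) (p : R) : R :=
  limn (fun n : nat => correct_cascade_prob_upto (q_report P p)
          `|cascade_threshold p (u_bar P)|%N n : R).

End Model.

From HB Require Import structures.
From mathcomp Require Import all_boot all_order all_algebra.
From mathcomp Require Import all_classical all_reals all_analysis.
From mathcomp Require Import zify ring lra.
Set Implicit Arguments. Unset Strict Implicit. Unset Printing Implicit Defensive.
Import Order.TTheory GRing.Theory Num.Theory.
Import numFieldNormedType.Exports.
Local Open Scope ring_scope.

(* Before a cascade the reports are i.i.d. and agree with theta with
   probability q = p + (1 - 2p) u_bar, so the public difference is a random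
   walk with up-probability q, and a correct cascade is the event that it
   reaches +k before -k.  By gambler's ruin this has probability
   1 / (1 + rho^k) with rho = (1 - q) / q = rho_bar p u_bar, which decreases
   as u_bar grows.  The threshold floor(log_rho alpha) + 1 equals k exactly
   when alpha^(1/(k-1)) <= rho < alpha^(1/k); as u |-> rho_bar p u is
   increasing with inverse rho_bar_inv p, this is the interval
   [v_tilde p k, v_tilde p (k+1)). *)

Definition exits_up (k : nat) (d : int) n (x : n.-tuple bool) : bool :=
  [exists i : 'I_n.+1, (d + diff_after x i == k%:Z) &&
     [forall j : 'I_n.+1, (j < i)%N ==> (`|d + diff_after x j| < k%:Z)]].

Lemma correct_cascade_by_exits_up k n (x : n.-tuple bool) :
  correct_cascade_by k x = exits_up k 0 x.
Proof.
apply: eq_existsb => i; rewrite add0r; congr andb.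
by apply: eq_forallb => j; rewrite add0r.
Qed.

Lemma diff_after0 n (x : n.-tuple bool) : diff_after x 0 = 0.
Proof. by rewrite /diff_after big1. Qed.

Lemma diff_after_cons n b (x : n.-tuple bool) i :
  diff_after [tuple of b :: x] i.+1 = (if b then 1 else -1) + diff_after x i.
Proof.
rewrite /diff_after big_mkcond big_ord_recl /= tnth0; congr (_ + _).
rewrite [RHS]big_mkcond; apply: eq_bigr => j _.
by rewrite tnthS /bump /= add1n ltnS.
Qed.

Lemma exits_up_cons k d n b (x : n.-tuple bool) : `|d| < k%:Z ->
  exits_up k d [tuple of b :: x] = exits_up k (d + (if b then 1 else -1)) x.
Proof.
move=> dk; apply/existsP/existsP.
- case=> -[[|i] Hi] /= /andP[/eqP di /forallP before_i].
    by move: di dk; rewrite diff_after0 addr0 => ->; lia.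
  exists (Ordinal (Hi : (i < n.+1)%N)); apply/andP; split.
    by rewrite /= -addrA -diff_after_cons di.
  apply/forallP => -[j Hj] /=; apply/implyP => ji.
  have := implyP (before_i (Ordinal (Hj : (j.+1 < n.+2)%N))).
  by rewrite /= ltnS diff_after_cons addrA; apply.
- case=> -[i Hi] /= /andP[/eqP di /forallP before_i].
  exists (Ordinal (Hi : (i.+1 < n.+2)%N)); apply/andP; split.
    by rewrite /= diff_after_cons addrA di.
  apply/forallP => -[[|j] Hj] /=; first by rewrite diff_after0 addr0.
  apply/implyP => ji; rewrite diff_after_cons addrA.
  exact: (implyP (before_i (Ordinal (Hj : (j < n.+1)%N))) ji).
Qed.

Lemma exits_up_top k n (x : n.-tuple bool) : exits_up k k x.
Proof.
apply/existsP; exists ord0; rewrite /= diff_after0 addr0 eqxx /=.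
by apply/forallP.
Qed.

Lemma exits_up_bottom k n (x : n.-tuple bool) :
  (0 < k)%N -> exits_up k (- k%:Z) x = false.
Proof.
move=> k_gt0; apply/negbTE/existsP.
case=> -[[|i] Hi] /= /andP[/eqP di /forallP before_i].
  by move: di; rewrite diff_after0 addr0; lia.
by have := implyP (before_i ord0) isT; rewrite /= diff_after0 addr0 normrN ltxx.
Qed.

Lemma exits_up_nil k d (x : 0.-tuple bool) : `|d| < k%:Z -> exits_up k d x = false.
Proof.
move=> dk; apply/negbTE/existsP.
case=> -[[|i] Hi] //= /andP[/eqP di _].
by move: di dk; rewrite diff_after0 addr0 => ->; lia.
Qed.

Lemma sum_tuple_cons (T : finType) (V : nmodType) n (f : n.+1.-tuple T -> V) :
  \sum_(x : n.+1.-tuple T) f x =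
  \sum_(b : T) \sum_(x : n.-tuple T) f [tuple of b :: x].
Proof.
rewrite pair_big /= (reindex (fun bx : T * n.-tuple T => [tuple of bx.1 :: bx.2])) //=.
exists (fun x : n.+1.-tuple T => (thead x, [tuple of behead x])).
  by move=> [b x] _ /=; rewrite theadE; congr (_, _); apply: val_inj.
by move=> x _; apply: val_inj; case: x => -[|b s].
Qed.

Section ExitProbability.
Variables (R : realType) (q : R).

Lemma seq_prob_cons n b (x : n.-tuple bool) :
  seq_prob q [tuple of b :: x] = (if b then q else 1 - q) * seq_prob q x.
Proof.
rewrite /seq_prob big_ord_recl tnth0; congr (_ * _).
by apply: eq_bigr => j _; rewrite tnthS.
Qed.

Lemma sum_seq_prob n : \sum_(x : n.-tuple bool) seq_prob q x = 1.
Proof.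
elim: n => [|n IHn].
  under eq_bigr do rewrite /seq_prob big_ord0.
  by rewrite sumr_const card_tuple.
rewrite sum_tuple_cons big_bool /=.
under eq_bigr do rewrite seq_prob_cons.
under [X in _ + X]eq_bigr do rewrite seq_prob_cons.
by rewrite -!mulr_sumr IHn !mulr1 addrC subrK.
Qed.

Definition exit_up_prob k d n : R :=
  \sum_(x : n.-tuple bool | exits_up k d x) seq_prob q x.

Lemma exit_up_probS k d n : `|d| < k%:Z ->
  exit_up_prob k d n.+1 =
  q * exit_up_prob k (d + 1) n + (1 - q) * exit_up_prob k (d - 1) n.
Proof.
move=> dk; rewrite /exit_up_prob big_mkcond sum_tuple_cons big_bool !mulr_sumr.
by congr (_ + _); rewrite [RHS]big_mkcond; apply: eq_bigr => x _;
  rewrite exits_up_cons // seq_prob_cons; case: ifP; rewrite ?mulr0.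
Qed.

Lemma exit_up_prob_top k n : exit_up_prob k k n = 1.
Proof.
by rewrite -(sum_seq_prob n); apply: eq_bigl => x; rewrite exits_up_top.
Qed.

Lemma exit_up_prob_bottom k n : (0 < k)%N -> exit_up_prob k (- k%:Z) n = 0.
Proof.
by move=> k_gt0; rewrite /exit_up_prob big_pred0 // => x; rewrite exits_up_bottom.
Qed.

Lemma exit_up_prob0 k d : `|d| < k%:Z -> exit_up_prob k d 0 = 0.
Proof.
by move=> dk; rewrite /exit_up_prob big_pred0 // => x; rewrite exits_up_nil.
Qed.

Hypotheses (q_ge0 : 0 <= q) (q_le1 : q <= 1).

Lemma seq_prob_ge0 n (x : n.-tuple bool) : 0 <= seq_prob q x.
Proof. by apply: prodr_ge0 => j _; case: ifP; rewrite ?subr_ge0. Qed.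

Lemma exit_up_prob_ge0 k d n : 0 <= exit_up_prob k d n.
Proof. by apply: sumr_ge0 => x _; exact: seq_prob_ge0. Qed.

Lemma exit_up_prob_le1 k d n : exit_up_prob k d n <= 1.
Proof.
rewrite -(sum_seq_prob n) /exit_up_prob big_mkcond.
by apply: ler_sum => x _; case: ifP => // _; exact: seq_prob_ge0.
Qed.

Lemma exit_up_prob_nondecreasing k d n : (0 < k)%N -> `|d| <= k%:Z ->
  exit_up_prob k d n <= exit_up_prob k d n.+1.
Proof.
move=> k_gt0; elim: n d => [|n IHn] d dk.
- have [->|d_ne_k] := eqVneq d k; first by rewrite !exit_up_prob_top.
  have [->|d_ne_mk] := eqVneq d (- k%:Z); first by rewrite !exit_up_prob_bottom.
  by rewrite exit_up_prob0 ?exit_up_prob_ge0 //; lia.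
- have [->|d_ne_k] := eqVneq d k; first by rewrite !exit_up_prob_top.
  have [->|d_ne_mk] := eqVneq d (- k%:Z); first by rewrite !exit_up_prob_bottom.
  have dk' : `|d| < k%:Z by lia.
  rewrite (exit_up_probS n.+1 dk') (exit_up_probS n dk').
  have up := IHn (d + 1) ltac:(lia); have down := IHn (d - 1) ltac:(lia).
  by rewrite lerD // ler_wpM2l // subr_ge0.
Qed.

End ExitProbability.

Section ExitLimit.
Variables (R : realType) (q : R) (k : nat).
Hypotheses (q_ge0 : 0 <= q) (q_le1 : q <= 1) (k_gt0 : (0 < k)%N).

Definition exit_up_limit d : R := limn (exit_up_prob q k d).

Lemma exit_up_prob_cvg d : `|d| <= k%:Z ->
  (exit_up_prob q k d @ \oo --> exit_up_limit d)%classic.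
Proof.
move=> dk; apply: nondecreasing_is_cvgn.
  by apply/nondecreasing_seqP => n; exact: exit_up_prob_nondecreasing.
by exists 1 => _ [n _ <-]; exact: exit_up_prob_le1.
Qed.

Lemma exit_up_limit_top : exit_up_limit k = 1.
Proof.
rewrite /exit_up_limit (_ : exit_up_prob q k k = fun=> 1) ?lim_cst //.
by apply: funext => n; exact: exit_up_prob_top.
Qed.

Lemma exit_up_limit_bottom : exit_up_limit (- k%:Z) = 0.
Proof.
rewrite /exit_up_limit (_ : exit_up_prob q k (- k%:Z) = fun=> 0) ?lim_cst //.
by apply: funext => n; exact: exit_up_prob_bottom.
Qed.

Lemma exit_up_limitS d : `|d| < k%:Z ->
  exit_up_limit d = q * exit_up_limit (d + 1) + (1 - q) * exit_up_limit (d - 1).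
Proof.
move=> dk; apply: cvg_lim => //; rewrite -cvg_shiftS /=.
under eq_fun do rewrite exit_up_probS //.
by apply: cvgD; apply: cvgMr; apply: exit_up_prob_cvg; lia.
Qed.

End ExitLimit.

Lemma sum_expr_ge1 (R : realDomainType) (x : R) n : 0 <= x -> (0 < n)%N ->
  1 <= \sum_(i < n) x ^+ i.
Proof.
move=> x_ge0; case: n => // n _; rewrite big_ord_recl expr0 lerDl.
by apply: sumr_ge0 => i _; exact: exprn_ge0.
Qed.

Lemma sum_exprD (R : pzSemiRingType) (x : R) m n :
  \sum_(i < m + n) x ^+ i = \sum_(i < m) x ^+ i + x ^+ m * \sum_(i < n) x ^+ i.
Proof.
rewrite big_split_ord mulr_sumr; congr (_ + _).
by apply: eq_bigr => i _; rewrite exprD.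
Qed.

Section WalkHarmonic.
Variables (R : realFieldType) (q : R) (N : nat) (D : nat -> R).
Hypothesis q_neq0 : q != 0.
Hypothesis D_harmonic :
  forall j, (j.+1 < N)%N -> D j.+1 = q * D j.+2 + (1 - q) * D j.
Local Notation s := ((1 - q) / q).

Lemma walk_harmonic_increment j : (j < N)%N -> D j.+1 - D j = s ^+ j * (D 1 - D 0).
Proof.
elim: j => [|j IHj] jN; first by rewrite expr0 mul1r.
have balance : q * (D j.+2 - D j.+1) = (1 - q) * (D j.+1 - D j).
  by have := D_harmonic jN; lra.
rewrite exprS -mulrA -IHj; last exact: ltnW.
by apply: (mulfI q_neq0); rewrite balance; field.
Qed.

Lemma walk_harmonicE j : (j <= N)%N -> D j = D 0 + (D 1 - D 0) * \sum_(i < j) s ^+ i.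
Proof.
elim: j => [|j IHj] jN; first by rewrite big_ord0 mulr0 addr0.
rewrite big_ord_recr /= mulrDr addrA -IHj; last exact: ltnW.
by rewrite mulrC -walk_harmonic_increment // addrC subrK.
Qed.

Lemma gamblers_ruin j : 0 < q -> q <= 1 -> (0 < N)%N -> D 0 = 0 -> D N = 1 ->
  (j <= N)%N -> D j = (\sum_(i < j) s ^+ i) / \sum_(i < N) s ^+ i.
Proof.
move=> q_gt0 q_le1 N_gt0 D0 DN jN.
have s_ge0 : 0 <= s by rewrite divr_ge0 // ?subr_ge0 // ltW.
have SN_neq0 : \sum_(i < N) s ^+ i != 0.
  by rewrite gt_eqF // (lt_le_trans ltr01) // sum_expr_ge1.
have D1 : D 1 = (\sum_(i < N) s ^+ i)^-1.
  have := walk_harmonicE (leqnn N); rewrite D0 DN add0r subr0 => SN_D1.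
  by rewrite -[D 1](mulfK SN_neq0) -SN_D1 mul1r.
by rewrite walk_harmonicE // D0 add0r subr0 D1 mulrC.
Qed.

End WalkHarmonic.

Lemma exit_up_limit0E (R : realType) (q : R) k : 0 < q -> q <= 1 -> (0 < k)%N ->
  exit_up_limit q k 0 = (1 + ((1 - q) / q) ^+ k)^-1.
Proof.
move=> q_gt0 q_le1 k_gt0.
pose D j := exit_up_limit q k (j%:Z - k%:Z).
have D_harmonic j : (j.+1 < k + k)%N -> D j.+1 = q * D j.+2 + (1 - q) * D j.
  move=> jk; rewrite /D (exit_up_limitS (ltW q_gt0) q_le1 k_gt0); last by lia.
  by congr (_ * exit_up_limit _ _ _ + _ * exit_up_limit _ _ _); lia.
have D0 : D 0 = 0 by rewrite /D sub0r exit_up_limit_bottom.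
have DN : D (k + k) = 1 by rewrite /D PoszD addrK exit_up_limit_top.
have := gamblers_ruin (lt0r_neq0 q_gt0) D_harmonic q_gt0 q_le1 _ D0 DN (leq_addr k k).
rewrite /D subrr => ->; last by rewrite addn_gt0 k_gt0.
have s_ge0 : 0 <= (1 - q) / q by rewrite divr_ge0 // ?subr_ge0 // ltW.
have Sk_gt0 := lt_le_trans ltr01 (sum_expr_ge1 s_ge0 k_gt0).
rewrite sum_exprD -{2}(mul1r (\sum_(i < k) _)) -mulrDl invfM.
by rewrite mulrCA divff ?mulr1 // gt_eqF.
Qed.

Section ExpectedFlip.
Variable R : realType.
Implicit Types (P : probability R R) (p : R).

Lemma flip_prob_gt0 (e : R) : 0 < flip_prob e.
Proof. by rewrite invr_gt0 ltr_wpDr // expR_ge0. Qed.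

Lemma flip_prob_lt1 (e : R) : flip_prob e < 1.
Proof. by rewrite invf_lt1 ?ltrDl ?expR_gt0 // ltr_wpDr // expR_ge0. Qed.

Lemma continuous_flip_prob : continuous (@flip_prob R).
Proof.
move=> x; apply: (@continuousV _ _ (fun y : R => 1 + expR y)).
  by rewrite gt_eqF // ltr_wpDr // expR_ge0.
by apply: continuousD; [exact: cst_continuous | exact: continuous_expR].
Qed.

Lemma integrable_flip_prob P : P.-integrable setT (fun e => (flip_prob e)%:E).
Proof.
apply: (@le_integrable _ _ _ _ _ _ _ (EFin \o cst 1)) => //.
- apply/measurable_realfun.measurable_EFinP.
  exact: measurable_realfun.continuous_measurable_fun continuous_flip_prob.
- move=> x _ /=; rewrite lee_fin normr1 ger0_norm ?ltW //.
    exact: flip_prob_lt1.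
  exact: flip_prob_gt0.
- exact: finite_measure_integrable_cst.
Qed.

Lemma u_bar_itv P : 0 <= u_bar P <= 1.
Proof.
rewrite /u_bar; set I := (\int[P]_e _)%E.
have I_fin : I \is a fin_num :=
  integrable_fin_num measurableT (integrable_flip_prob P).
have I_ge0 : (0 <= I)%E.
  by apply: integral_ge0 => e _; rewrite lee_fin ltW // flip_prob_gt0.
have I_le1 : (I <= \int[P]_e cst 1 e)%E.
  apply: le_integral => //; first exact: integrable_flip_prob.
    exact: finite_measure_integrable_cst.
  by move=> e _; rewrite lee_fin ltW // flip_prob_lt1.
rewrite integral_cst // mul1e [X in (_ <= X)%E](_ : _ = 1%E) in I_le1;
  last exact: probability_setT.
by rewrite -!lee_fin fineK // I_ge0 I_le1.
Qed.

Lemma q_reportE P p : q_report P p = p + (1 - 2 * p) * u_bar P.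
Proof.
rewrite /q_report /u_bar.
rewrite (eq_integral (fun e => p%:E + (1 - 2 * p)%:E * (flip_prob e)%:E)%E); last first.
  by move=> e _; rewrite -EFinM -EFinD /report_correct_given; congr (_%:E); ring.
rewrite integralD //; last 2 first.
- exact: finite_measure_integrable_cst.
- by apply: integrableZl => //; exact: integrable_flip_prob.
rewrite integralZl //; last exact: integrable_flip_prob.
rewrite integral_cst // [X in (_ * X)%E](_ : _ = 1%E) ?mule1;
  last exact: probability_setT.
have := integrable_fin_num measurableT (integrable_flip_prob P).
by case: (\int[P]_e _)%E.
Qed.

Lemma q_report_itv P p : 0 < p < 1 -> 0 < q_report P p <= 1.
Proof.
move=> /andP[p_gt0 p_lt1]; have /andP[u_ge0 u_le1] := u_bar_itv P.
by rewrite q_reportE; apply/andP; split; nra.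
Qed.

Lemma q_report_lt P1 P2 p : 1 / 2 < p -> u_bar P1 < u_bar P2 ->
  q_report P2 p < q_report P1 p.
Proof. by move=> p_gt_half u12; rewrite !q_reportE; nra. Qed.

End ExpectedFlip.

Lemma floor_ln_ratio (R : realType) (a r : R) (k : nat) : 0 < a < 1 -> 0 < r ->
  (1 < k)%N -> a `^ (1 / (k%:R - 1)) <= r < a `^ (1 / k%:R) ->
  Num.floor (ln a / ln r) = k%:Z - 1.
Proof.
move=> /andP[a_gt0 a_lt1] r_gt0 k_gt1 /andP[lo hi].
have k_gt0 : 0 < k%:R :> R by rewrite ltr0n; lia.
have km1_gt0 : 0 < k%:R - 1 :> R by rewrite subr_gt0 ltr1n.
have ln_a_lt0 : ln a < 0 by rewrite ln_lt0 // a_gt0.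
have {lo}lo : ln a / (k%:R - 1) <= ln r.
  by rewrite -ler_ln ?posrE ?powR_gt0 // ln_powR mul1r mulrC in lo.
have {hi}hi : ln r < ln a / k%:R.
  by rewrite -ltr_ln ?posrE ?powR_gt0 // ln_powR mul1r mulrC in hi.
have ln_r_lt0 : ln r < 0.
  by apply: lt_trans hi _; rewrite ltr_pdivrMr // mul0r.
rewrite (@floor_def _ _ (k%:Z - 1)) // subrK intrB; apply/andP; split.
  by rewrite ler_ndivlMr // mulrC -ler_pdivrMr.
by rewrite ltr_ndivrMr // mulrC -ltr_pdivlMr.
Qed.

Definition rho_bar_inv (R : realType) (p r : R) : R :=
  (p * r - (1 - p)) / ((2 * p - 1) * (1 + r)).

Section Threshold.
Variables (R : realType) (p : R).
Hypotheses (p_gt_half : 1 / 2 < p) (p_lt1 : p < 1).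
Local Notation alpha := ((1 - p) / p).

Lemma alpha_itv : 0 < alpha < 1.
Proof.
have p_gt0 : 0 < p by move: p_gt_half; lra.
by rewrite divr_gt0 ?ltr_pdivrMr // ?subr_gt0 //; move: p_gt_half; lra.
Qed.

Lemma v_tildeE m : (2 <= m)%N ->
  v_tilde p m = rho_bar_inv p (alpha `^ (1 / (m%:R - 1))).
Proof.
move=> m_ge2; have /andP[a_gt0 a_lt1] := alpha_itv.
have m_gt1 : 1 < m%:R :> R by rewrite ltr1n.
rewrite /v_tilde /=; set x := 1 / (m%:R - 1).
have -> : (m%:R - 2) / (m%:R - 1) = 1 - x :> R by rewrite /x; field; lra.
rewrite powRB; last by rewrite (gt_eqF a_gt0) implybT.
rewrite powRr1 ?powRN; last exact: ltW.
set r := alpha `^ x; have r_gt0 : 0 < r by rewrite powR_gt0.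
rewrite /rho_bar_inv; field.
by rewrite !gt_eqF //; move: p_gt_half r_gt0; nra.
Qed.

Lemma le_rho_bar r u : 0 < r -> 0 <= u <= 1 ->
  (r <= rho_bar p u) = (rho_bar_inv p r <= u).
Proof.
move=> r_gt0 /andP[u_ge0 u_le1].
have Q_gt0 : 0 < u * (1 - p) + p * (1 - u) by move: p_gt_half p_lt1; nra.
have D_gt0 : 0 < (2 * p - 1) * (1 + r) by move: p_gt_half; nra.
have gap : (1 - u) * (1 - p) + u * p - r * (u * (1 - p) + p * (1 - u)) =
           (2 * p - 1) * (1 + r) * (u - rho_bar_inv p r).
  by rewrite /rho_bar_inv; field; rewrite andbC -negb_or -mulf_eq0 gt_eqF.
by rewrite /rho_bar ler_pdivlMr // -subr_ge0 gap pmulr_rge0 // subr_ge0.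
Qed.

Lemma lt_rho_bar r u : 0 < r -> 0 <= u <= 1 ->
  (rho_bar p u < r) = (u < rho_bar_inv p r).
Proof. by move=> r_gt0 u_itv; rewrite !ltNge le_rho_bar. Qed.

Lemma rho_bar_gt0 u : 0 <= u <= 1 -> 0 < rho_bar p u.
Proof.
by move=> /andP[u_ge0 u_le1]; rewrite divr_gt0 //; move: p_gt_half p_lt1; nra.
Qed.

Lemma cascade_thresholdE k u : (2 <= k)%N -> 0 <= u <= 1 ->
  v_tilde p k <= u < v_tilde p k.+1 -> cascade_threshold p u = k%:Z.
Proof.
move=> k_ge2 u_itv /andP[lo hi].
have a_itv := alpha_itv; have /andP[a_gt0 _] := a_itv.
rewrite /cascade_threshold (floor_ln_ratio (k := k) a_itv (rho_bar_gt0 u_itv)) ?subrK //.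
rewrite le_rho_bar ?lt_rho_bar ?powR_gt0 // -v_tildeE // lo /=.
by move: hi; rewrite (v_tildeE (leqW k_ge2)) -natr1 addrK.
Qed.

End Threshold.

Lemma exit_up_limit0_lt (R : realType) (q1 q2 : R) k : 0 < q1 < q2 -> q2 <= 1 ->
  (0 < k)%N -> exit_up_limit q1 k 0 < exit_up_limit q2 k 0.
Proof.
move=> /andP[q1_gt0 q12] q2_le1 k_gt0; have q2_gt0 := lt_trans q1_gt0 q12.
rewrite !exit_up_limit0E // ?(le_trans (ltW q12)) //.
have odds_ge0 : 0 <= (1 - q2) / q2 by rewrite divr_ge0 ?subr_ge0 // ltW.
have odds_lt : (1 - q2) / q2 < (1 - q1) / q1.
  by rewrite !mulrBl !divff ?gt_eqF // ltrD2r !mul1r ltf_pV2 ?posrE.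
have denom_gt0 s : 0 <= s -> 0 < 1 + s ^+ k.
  by move=> s_ge0; rewrite ltr_wpDr ?exprn_ge0.
rewrite ltf_pV2 ?posrE ?denom_gt0 ?(le_trans odds_ge0 (ltW odds_lt)) //.
by rewrite ltrD2l ltrXn2r // -lt0n.
Qed.

Lemma correct_cascade_probE (R : realType) (P : probability R R) (p : R) k :
  cascade_threshold p (u_bar P) = k%:Z ->
  correct_cascade_prob P p = exit_up_limit (q_report P p) k 0.
Proof.
move=> threshold; rewrite /correct_cascade_prob threshold /=; congr (limn _).
apply: funext => n; apply: eq_bigl => x; exact: correct_cascade_by_exits_up.
Qed.

Theorem theorem3 (R : realType) (p : R) (k : nat) :
  1 / 2 < p -> p < 1 -> (2 <= k)%N ->
  (forall P : probability R R,
      v_tilde p k <= u_bar P < v_tilde p k.+1 ->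
      cascade_threshold p (u_bar P) = k%:Z) /\
  (forall P1 P2 : probability R R,
      v_tilde p k <= u_bar P1 < v_tilde p k.+1 ->
      v_tilde p k <= u_bar P2 < v_tilde p k.+1 ->
      u_bar P1 < u_bar P2 ->
      correct_cascade_prob P2 p < correct_cascade_prob P1 p).
Proof.
move=> p_gt_half p_lt1 k_ge2.
have thresholdE P : v_tilde p k <= u_bar P < v_tilde p k.+1 ->
    cascade_threshold p (u_bar P) = k%:Z.
  exact: cascade_thresholdE (u_bar_itv P).
split=> // P1 P2 /thresholdE threshold1 /thresholdE threshold2 u12.
rewrite (correct_cascade_probE threshold1) (correct_cascade_probE threshold2).
have p_itv : 0 < p < 1 by apply/andP; split => //; move: p_gt_half; lra.
have /andP[q2_gt0 _] := q_report_itv P2 p_itv.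
have /andP[_ q1_le1] := q_report_itv P1 p_itv.
apply: exit_up_limit0_lt q1_le1 (ltnW k_ge2).
by rewrite q2_gt0 q_report_lt.
Qed.
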